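(* Let $N=\ell^2$ for a positive integer $\ell$ and let $x,y\in\{0,1\}^N$. If $\sqrt{N} \ge 3\cdot\textsc{INT}(x,y)$, then the size of the global minimum cut of $G_{x,y}$ equals $2\cdot\textsc{INT}(x,y)$.
   Context: $\textsc{INT}(x,y)=\sum_{i} x_i\wedge y_i$. Index the bits of $x,y\in\{0,1\}^{\ell^2}$ as $x_{i,j},y_{i,j}$ for $1\le i,j\le \ell$. The undirected unweighted graph $G_{x,y}$ has vertex set $A\cup A'\cup B\cup B'$ with $A=\{a_1,\dots,a_\ell\}$, $A'=\{a'_1,\dots,a'_\ell\}$, $B=\{b_1,\dots,b_\ell\}$, $B'=\{b'_1,\dots,b'_\ell\}$ (disjoint), and for each $1\le i,j\le\ell$: if $x_{i,j}=y_{i,j}=1$ then the edges $(a_i,b'_j)$ and $(b_i,a'_j)$ are present; otherwise the edges $(a_i,a'_j)$ and $(b_i,b'_j)$ are present. No other edges exist. The global minimum cut size is $\min_{\varnothing\subset S\subset V}|E(S,V\setminus S)|$. *)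

From mathcomp Require Import all_boot.
Set Implicit Arguments. Unset Strict Implicit. Unset Printing Implicit Defensive.

(* Vertices of G_{x,y}: (k, i) with k : 'I_4 encoding the part
   0 = A, 1 = A', 2 = B, 3 = B', and i : 'I_l the index (0-based). *)
Definition vert (l : nat) := ('I_4 * 'I_l)%type.

(* Bit strings in {0,1}^{l^2}, indexed by pairs (i,j). *)
Definition bits (l : nat) := {ffun 'I_l * 'I_l -> bool}.

Definition INT (l : nat) (x y : bits l) : nat :=
  #|[set p : 'I_l * 'I_l | x p && y p]|.

Definition pA : 'I_4 := @Ordinal 4 0 isT.
Definition pA' : 'I_4 := @Ordinal 4 1 isT.
Definition pB : 'I_4 := @Ordinal 4 2 isT.
Definition pB' : 'I_4 := @Ordinal 4 3 isT.

Definition gen (l : nat) (x y : bits l) (u v : vert l) : bool :=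
  let: (ku, i) := u in let: (kv, j) := v in
  if x (i, j) && y (i, j) then
    ((ku == pA) && (kv == pB')) || ((ku == pB) && (kv == pA'))
  else
    ((ku == pA) && (kv == pA')) || ((ku == pB) && (kv == pB')).

Definition adj (l : nat) (x y : bits l) : rel (vert l) :=
  fun u v => gen x y u v || gen x y v u.

(* number of edges crossing the cut (S, V \ S): every undirected edge
   {u,v} with u in S, v notin S is counted exactly once as the ordered
   pair (u,v). *)
Definition cut_size (l : nat) (x y : bits l) (S : {set vert l}) : nat :=
  #|[set e : vert l * vert l | [&& e.1 \in S, e.2 \notin S & adj x y e.1 e.2]]|.

Definition proper_cut (l : nat) (S : {set vert l}) : bool :=
  (S != set0) && (S != [set: vert l]).

Definition is_global_min_cut (l : nat) (x y : bits l) (m : nat) : Prop :=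
  (exists2 S : {set vert l}, proper_cut S & cut_size x y S = m) /\
  (forall S : {set vert l}, proper_cut S -> m <= cut_size x y S).

From mathcomp Require Import all_boot zify.
Set Implicit Arguments. Unset Strict Implicit. Unset Printing Implicit Defensive.

(* The 2 l^2 edges of G_{x,y} are indexed by a side (A or B) and a position
   (i, j).  If a cut S separates some a_i from some a'_j, then at least l of
   the pairs (a_i, a'_j) are separated, and at most INT of the corresponding
   positions carry a crossing edge instead of the edge (a_i, a'_j); so at
   least l - INT >= 2 INT edges are cut, and likewise for B and B'.
   Otherwise S is a union of the halves A u A' and B u B', and as S is proper
   it is exactly one of them: then the cut edges are the 2 INT crossing ones.
   The cut S = A u A' shows that the bound is attained. *)

Lemma card_neq_pairs (T : finType) (f g : T -> bool) i0 j0 :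
  f i0 != g j0 -> #|T| <= #|[set p : T * T | f p.1 != g p.2]|.
Proof.
move=> fg0; case: (pickP (fun i => f i != f i0)) => [i1 fi1 | f_const].
  pose h t := (if f i0 != g t then i0 else i1, t).
  have inj : injective h by move=> a b /(congr1 snd).
  rewrite -(card_imset _ inj); apply/subset_leq_card/subsetP => _ /imsetP [t _ ->].
  rewrite inE /h /=; case: ifP => // /negbFE/eqP <-.
  exact: fi1.
have inj : injective (fun t : T => (t, j0)) by move=> a b [].
rewrite -(card_imset _ inj); apply/subset_leq_card/subsetP => _ /imsetP [t _ ->].
by rewrite inE /= (eqP (negbFE (f_const t))).
Qed.

Definition crossing (T : finType) (S : {set T}) (e : T * T) : bool :=
  (e.1 \in S) != (e.2 \in S).

Definition orient (T : finType) (S : {set T}) (e : T * T) : T * T :=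
  if e.1 \in S then e else (e.2, e.1).

Definition src (b : bool) : 'I_4 := if b then pB else pA.
Definition dst (b : bool) : 'I_4 := if b then pB' else pA'.
Definition side (k : 'I_4) : bool := 2 <= k.

Lemma side_src b : side (src b) = b. Proof. by case: b. Qed.

Lemma side_dst b : side (dst b) = b. Proof. by case: b. Qed.

Lemma src_inj : injective src. Proof. by case; case. Qed.

Lemma src_neq_dst b b' : src b != dst b'. Proof. by case: b; case: b'. Qed.

Lemma src_or_dst k : k = src (side k) \/ k = dst (side k).
Proof.
by case: k => [[|[|[|[|m]]]] hk] //; [left|right|left|right]; apply: val_inj.
Qed.

Lemma mem_unsplit l (S : {set vert l}) (o : 'I_l) :
  (forall b i j, ((src b, i) \in S) = ((dst b, j) \in S)) ->
  forall v, (v \in S) = ((src (side v.1), o) \in S).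
Proof.
move=> sides_eq [k i]; case: (src_or_dst k) => ->; rewrite /= ?side_src ?side_dst.
  by rewrite (sides_eq _ i o) (sides_eq _ o o).
by rewrite (sides_eq _ o i).
Qed.

Section Edges.
Variables (l : nat) (x y : bits l).

(* [edge (b, (i, j))] is the edge created at position (i, j) on the A side
   (b = false) or on the B side (b = true); the xor sends it to the primed
   part of the other side exactly when x_ij = y_ij = 1. *)
Definition edge (e : bool * ('I_l * 'I_l)) : vert l * vert l :=
  ((src e.1, e.2.1), (dst (e.1 (+) (x e.2 && y e.2)), e.2.2)).

Lemma gen_edgeP u v : reflect (exists e, edge e = (u, v)) (gen x y u v).
Proof.
case: u v => [ku i] [kv j]; apply: (iffP idP) => [|[[b [i' j']]] [<- <- <- <-]].
  rewrite /gen; case xy: (x (i, j) && y (i, j));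
    case/orP=> /andP [/eqP -> /eqP ->];
    first [by exists (false, (i, j)); rewrite /edge /= xy
          | by exists (true, (i, j)); rewrite /edge /= xy].
by rewrite /gen /=; case: b; case: (x (i', j') && y (i', j')).
Qed.

Lemma edge_inj : injective edge.
Proof.
move=> [b [i j]] [b' [i' j']] [/src_inj eq_b -> _ ->].
by rewrite eq_b.
Qed.

Lemma orient_edge_inj (S : {set vert l}) : injective (fun e => orient S (edge e)).
Proof.
have edge_src_neq_dst e e' : (edge e).1.1 != (edge e').2.1 by exact: src_neq_dst.
move=> e e'; rewrite /orient /=.
case: ifP => _; case: ifP => _ eq_ee'.
- exact: edge_inj.
- by have := edge_src_neq_dst e e'; rewrite eq_ee' eqxx.
- by have := edge_src_neq_dst e' e; rewrite -eq_ee' eqxx.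
- by apply: edge_inj; move/(congr1 (fun p => (p.2, p.1))): eq_ee'.
Qed.

Lemma cut_size_crossing (S : {set vert l}) :
  cut_size x y S = #|[set e | crossing S (edge e)]|.
Proof.
rewrite -(card_imset _ (@orient_edge_inj S)); apply: eq_card => -[u v].
rewrite !inE /=; apply/and3P/imsetP => [[uS vS] | [e]].
  case/orP=> /gen_edgeP [e ee]; exists e;
  by rewrite ?inE /crossing /orient ee /= ?uS ?(negbTE vS).
rewrite inE /crossing /orient; case ee: (edge e) => [u' v'] /=.
have gen_uv' : gen x y u' v' by apply/gen_edgeP; exists e.
case: ifP => u'S cr [-> ->]; rewrite /adj gen_uv' ?orbT;
by move: u'S cr; case: (u' \in S); case: (v' \in S).
Qed.

Lemma crossing_edge_sides (s : bool -> bool) (S : {set vert l}) e :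
  s false != s true -> (forall v, (v \in S) = s (side v.1)) ->
  crossing S (edge e) = x e.2 && y e.2.
Proof.
move=> s_neq memS; rewrite /crossing !memS /= side_src side_dst.
by case: e.1; case: (x e.2 && y e.2); rewrite //= ?eqxx // eq_sym.
Qed.

Lemma cut_size_sides (s : bool -> bool) (S : {set vert l}) :
  s false != s true -> (forall v, (v \in S) = s (side v.1)) ->
  cut_size x y S = 2 * INT x y.
Proof.
move=> s_neq memS; rewrite cut_size_crossing.
have -> : [set e | crossing S (edge e)] = setX [set: bool] [set p | x p && y p].
  by apply/setP => e; rewrite !inE (crossing_edge_sides _ s_neq memS).
by rewrite cardsX cardsT card_bool.
Qed.

Lemma cut_size_split (S : {set vert l}) b i j :
  ((src b, i) \in S) != ((dst b, j) \in S) -> l - INT x y <= cut_size x y S.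
Proof.
move=> split_ij; rewrite cut_size_crossing.
set M := [set p : 'I_l * 'I_l | ((src b, p.1) \in S) != ((dst b, p.2) \in S)].
set I := [set p | x p && y p].
have l_le_M : l <= #|M|.
  rewrite -{1}(card_ord l).
  exact: (card_neq_pairs (f := fun i => (src b, i) \in S)
                         (g := fun j => (dst b, j) \in S) split_ij).
have M_I : #|M| - #|I| <= #|M :\: I|.
  by rewrite cardsD leq_sub2l // subset_leq_card // subsetIr.
have pair_inj : injective (fun p : 'I_l * 'I_l => (b, p)) by move=> p q [].
have MI_crossing : #|M :\: I| <= #|[set e | crossing S (edge e)]|.
  rewrite -(card_imset _ pair_inj); apply/subset_leq_card/subsetP => _ /imsetP [p + ->].
  by rewrite !inE /crossing /= => /andP [/negbTE -> pM]; rewrite addbF.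
exact: leq_trans (leq_sub2r _ l_le_M) (leq_trans M_I MI_crossing).
Qed.

Lemma proper_cut_size_ge (S : {set vert l}) :
  0 < l -> 3 * INT x y <= l -> proper_cut S -> 2 * INT x y <= cut_size x y S.
Proof.
move=> l_gt0 INT_le /andP [S_neq0 S_neqT].
case: (boolP [exists b, exists i, exists j, ((src b, i) \in S) != ((dst b, j) \in S)]).
  case/existsP=> b /existsP [i /existsP [j split_ij]].
  by apply: leq_trans (cut_size_split split_ij); lia.
move/existsPn=> no_split.
have sides_eq b i j : ((src b, i) \in S) = ((dst b, j) \in S).
  by apply/eqP; move/existsPn: (no_split b) => /(_ i) /existsPn /(_ j) /negPn.
pose s b := (src b, Ordinal l_gt0) \in S.
have memS := mem_unsplit (Ordinal l_gt0) sides_eq.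
have s_neq : s false != s true.
  apply/negP => /eqP s_eq.
  have memS' v : (v \in S) = s false by rewrite memS s_eq; case: (side v.1).
  case: (s false) memS' => memS'.
    by move/eqP: S_neqT; apply; apply/setP => v; rewrite inE memS'.
  by move/eqP: S_neq0; apply; apply/setP => v; rewrite inE memS'.
by rewrite (cut_size_sides s_neq memS).
Qed.

End Edges.

Theorem lemma5p5 (l : nat) (x y : bits l) :
  0 < l -> 3 * INT x y <= l ->
  is_global_min_cut x y (2 * INT x y).
Proof.
move=> l_gt0 INT_le.
pose S0 := [set v : vert l | ~~ side v.1].
have memS0 v : (v \in S0) = ~~ side v.1 by rewrite inE.
split; last by move=> S; exact: proper_cut_size_ge.
exists S0; last exact: (@cut_size_sides _ x y negb).
apply/andP; split; apply/eqP => /setP S0E.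
  by have := S0E (pA, Ordinal l_gt0); rewrite !inE.
by have := S0E (pB, Ordinal l_gt0); rewrite !inE.
Qed.
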